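(* Let $X$ be a simplicial set, let $Y$ be a reduced $N$-simplicial set, and let $f\colon X\to Y$ be a simplicial map. Then $f$ is completely determined by its restriction to the $1$-skeleton of $X$.
   Context: A simplicial set $Y$ is reduced if $Y_0$ is a single point. The enumerating operator $E_n\colon Y_n\to Y_1\times\cdots\times Y_1$ ($n$ factors) sends an $n$-simplex $\sigma\colon\Delta[n]\to Y$ to the tuple of its consecutive edges $(\sigma|_{\{0,1\}},\dots,\sigma|_{\{n-1,n\}})$. $Y$ is an $N$-simplicial set if $E_n$ is injective for every $n\ge1$. *)

From mathcomp Require Import all_boot.
Set Implicit Arguments. Unset Strict Implicit. Unset Printing Implicit Defensive.

(* Objects of Δ: [n] = {0,...,n} = 'I_n.+1.  Morphisms [m] -> [n]:
   order-preserving (weakly monotone) maps. *)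
Definition monob (m n : nat) (f : {ffun 'I_m.+1 -> 'I_n.+1}) : bool :=
  [forall i : 'I_m.+1, forall j : 'I_m.+1, (i <= j) ==> (f i <= f j)].

Definition DHom (m n : nat) := {f : {ffun 'I_m.+1 -> 'I_n.+1} | monob f}.

Definition did (n : nat) : DHom n n.
Proof. exists [ffun i => i]. by apply/forallP=> i; apply/forallP=> j; rewrite !ffunE; apply/implyP. Defined.

Definition dcomp (l m n : nat) (g : DHom m n) (f : DHom l m) : DHom l n.
Proof.
  exists [ffun i => sval g (sval f i)].
  apply/forallP=> i; apply/forallP=> j; apply/implyP=> hij; rewrite !ffunE.
  have /forallP/(_ i)/forallP/(_ j)/implyP hf := svalP f.
  have /forallP/(_ (sval f i))/forallP/(_ (sval f j))/implyP hg := svalP g.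
  exact: hg (hf hij).
Defined.

Record sSet := {
  sobj :> nat -> Type;
  sact : forall m n : nat, DHom m n -> sobj n -> sobj m;
  sact_id : forall n (x : sobj n), sact (did n) x = x;
  sact_comp : forall l m n (g : DHom m n) (f : DHom l m) (x : sobj n),
      sact (dcomp g f) x = sact f (sact g x)
}.

Record smap (X Y : sSet) := {
  smap_fun :> forall n : nat, X n -> Y n;
  smap_nat : forall m n (a : DHom m n) (x : X n),
      @smap_fun m (sact a x) = sact a (@smap_fun n x)
}.

(* The 1-skeleton of X: the simplicial subset of simplices that are
   images X(α)(τ) of a k-simplex τ with k <= 1 (i.e. degeneracies of
   vertices and edges). *)
Definition in_sk1 (X : sSet) (n : nat) (x : X n) : Prop :=
  exists (k : nat) (_ : k <= 1) (a : DHom n k) (t : X k), x = sact a t.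

Definition reduced (Y : sSet) : Prop := exists y0 : Y 0, forall y : Y 0, y = y0.

Definition edge_inc (n : nat) (i : 'I_n) : DHom 1 n.
Proof.
  exists [ffun j : 'I_2 => (inord (i + j) : 'I_n.+1)].
  apply/forallP=> j; apply/forallP=> j'; apply/implyP=> hjj'; rewrite !ffunE.
  have hi := ltn_ord i; have hj := ltn_ord j; have hj' := ltn_ord j'.
  rewrite !inordK ?leq_add2l //.
  - by rewrite ltnS; move: hj' hi; case: (nat_of_ord j') => [|[|]] //= _;
       rewrite ?addn0 ?addn1 // => /ltnW.
  - by rewrite ltnS; move: hj hi; case: (nat_of_ord j) => [|[|]] //= _;
       rewrite ?addn0 ?addn1 // => /ltnW.
Defined.

Definition enum_op (Y : sSet) (n : nat) (y : Y n) : 'I_n -> Y 1 :=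
  fun i => sact (edge_inc i) y.

Definition N_simplicial (Y : sSet) : Prop :=
  forall n : nat, 1 <= n -> forall y y' : Y n,
    (forall i : 'I_n, enum_op y i = enum_op y' i) -> y = y'.

From mathcomp Require Import all_boot.

(* In an N-simplicial set a simplex of positive dimension is determined by its
   consecutive edges, and naturality carries these edges through a simplicial
   map. Hence two maps into an N-simplicial set agreeing on vertices and edges
   agree everywhere; vertices and edges lie in the 1-skeleton. *)

Lemma in_sk1_low_dim (X : sSet) (k : nat) (x : X k) : k <= 1 -> in_sk1 x.
Proof. by move=> hk; exists k, hk, (did k), x; rewrite sact_id. Qed.

Lemma enum_op_smap (X Y : sSet) (f : smap X Y) (n : nat) (x : X n) (i : 'I_n) :
  enum_op (f n x) i = f 1 (sact (edge_inc i) x).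
Proof. by rewrite /enum_op smap_nat. Qed.

Lemma smap_eq_of_eq_low_dim (X Y : sSet) (hN : N_simplicial Y) (f g : smap X Y) :
  (forall x : X 0, f 0 x = g 0 x) -> (forall x : X 1, f 1 x = g 1 x) ->
  forall (n : nat) (x : X n), f n x = g n x.
Proof.
move=> fg0 fg1 [|n] x; first exact: fg0.
by apply: hN => // i; rewrite !enum_op_smap fg1.
Qed.

Theorem lemma4p6 (X Y : sSet) (hred : reduced Y) (hN : N_simplicial Y)
    (f g : smap X Y) :
  (forall (n : nat) (x : X n), in_sk1 x -> f n x = g n x) ->
  forall (n : nat) (x : X n), f n x = g n x.
Proof.
move=> fg_sk1; apply: smap_eq_of_eq_low_dim => // x.
all: by apply: fg_sk1; apply: in_sk1_low_dim.
Qed.
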